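(* There is a constant $c>0$ such that for every unit interval graph $G=(V,E)$ with $N=|V|\ge 2$ nodes, labeled $v_0,\dots,v_{N-1}$ in increasing order of the left endpoints of their intervals, the minimal $\pi$-OBDD representing $\chi_E$ has at most $c\,N/\log N$ nodes, where $\pi$ is the $2$-interleaved variable order with decreasing significance.
   Context: A unit interval graph on $N$ nodes is given by intervals $[a_i,a_i+1]$, $0\le i\le N-1$; two distinct nodes are adjacent iff their intervals intersect. Without loss of generality all endpoints are distinct, and the nodes are labeled so that $a_0<a_1<\dots<a_{N-1}$. Let $n=\lceil\log_2 N\rceil$. For $x=(x_0,\dots,x_{n-1})\in\{0,1\}^n$ put $|x|=\sum_{i=0}^{n-1}x_i2^i$. The characteristic function $\chi_E:\{0,1\}^{2n}\to\{0,1\}$ is defined by $\chi_E(x,y)=1$ iff $|x|,|y|<N$ and $\{v_{|x|},v_{|y|}\}\in E$. A $\pi$-OBDD for a variable order $\pi$ (a linear order of the input variables) is a directed acyclic rooted graph with two sinks labeled $0$ and $1$. Every inner node is labeled by a variable and has two outgoing edges labeled $0$ and $1$, and along every edge the variables respect $\pi$. An assignment determines a path from the root by following, at each node labeled $x_i$, the edge labeled by the value of $x_i$. The OBDD represents $f$ if this path always ends in the sink labeled $f(\text{assignment})$. The size of an OBDD is its number of nodes. The $2$-interleaved variable order with decreasing significance on $x,y\in\{0,1\}^n$ is $(x_{n-1},y_{n-1},x_{n-2},y_{n-2},\dots,x_0,y_0)$. *)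

From HB Require Import structures.
From mathcomp Require Import all_boot all_order all_algebra.
Set Implicit Arguments. Unset Strict Implicit. Unset Printing Implicit Defensive.
Import Order.TTheory GRing.Theory Num.Theory.

(* An OBDD with m inner nodes 'I_m and two sinks (inl false / inl true).
   A node reference is [inl b] (the sink labeled b) or [inr i] (inner node i). *)
Record obdd (V : finType) (m : nat) := Obdd {
  ob_var  : 'I_m -> V;
  ob_lo   : 'I_m -> (bool + 'I_m)%type;
  ob_hi   : 'I_m -> (bool + 'I_m)%type;
  ob_root : (bool + 'I_m)%type
}.

(* size = number of nodes = inner nodes + the two sinks *)
Definition obdd_size (V : finType) (m : nat) (B : obdd V m) : nat := m + 2.

Definition ob_edge (V : finType) (m : nat) (B : obdd V m) : rel (bool + 'I_m)%type :=
  fun u v => match u with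
             | inl _ => false
             | inr i => (v == ob_lo B i) || (v == ob_hi B i)
             end.

(* B is a pi-OBDD, where the linear order pi on the variables is given by an
   injective rank function rk (position of a variable in pi):
   - rooted: every inner node is reachable from the root;
   - along every edge between inner nodes the variables strictly respect pi
     (this also makes the graph acyclic). *)
Definition is_pi_obdd (V : finType) (rk : V -> nat) (m : nat) (B : obdd V m) : Prop :=
  (forall i : 'I_m, connect (ob_edge B) (ob_root B) (inr i)) /\
  (forall i j : 'I_m, (ob_lo B i = inr j \/ ob_hi B i = inr j) ->
       rk (ob_var B i) < rk (ob_var B j)).

Fixpoint ob_eval_ref (V : finType) (m : nat) (B : obdd V m) (fuel : nat)
    (r : (bool + 'I_m)%type) (x : V -> bool) : bool :=
  match r with
  | inl b => b
  | inr i => match fuel with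
             | 0 => false
             | k.+1 => ob_eval_ref B k (if x (ob_var B i) then ob_hi B i else ob_lo B i) x
             end
  end.

(* In a pi-OBDD a path visits at most m inner nodes, so fuel m suffices. *)
Definition ob_eval (V : finType) (m : nat) (B : obdd V m) (x : V -> bool) : bool :=
  ob_eval_ref B m (ob_root B) x.

Definition represents (V : finType) (m : nat) (B : obdd V m) (f : (V -> bool) -> bool) : Prop :=
  forall x : V -> bool, ob_eval B x = f x.

(* Input variables for x,y in {0,1}^n: (false, i) is x_i, (true, i) is y_i. *)
Definition xyvar (n : nat) : finType := (bool * 'I_n)%type.

Definition binval (n : nat) (x : 'I_n -> bool) : nat := \sum_(i < n) x i * 2 ^ i.

(* 2-interleaved order with decreasing significance:
   x_{n-1}, y_{n-1}, x_{n-2}, y_{n-2}, ..., x_0, y_0.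
   Position of x_i is 2(n-1-i), position of y_i is 2(n-1-i)+1. *)
Definition interleaved_rank (n : nat) (v : xyvar n) : nat :=
  (n.-1 - v.2).*2 + v.1.

Definition nbits (N : nat) : nat := up_log 2 N.

(* Unit interval graph given by intervals [a_i, a_i + 1], i < N:
   distinct nodes i, j are adjacent iff the intervals intersect. *)
Definition uig_adj (R : realFieldType) (a : nat -> R) (i j : nat) : bool :=
  (i != j) && (`|a i - a j| <= 1)%R.

Definition chiE (R : realFieldType) (a : nat -> R) (N : nat)
    (z : xyvar (nbits N) -> bool) : bool :=
  let X := binval (fun i => z (false, i)) in
  let Y := binval (fun i => z (true, i)) in
  [&& X < N, Y < N & uig_adj a X Y].

(* We use the quasi-reduced OBDD of chi_E, whose nodes at level k are
   the distinct cofactors of chi_E obtained by fixing the first k variables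
   (section QuasiReducedObdd); fixing one more variable at most doubles their
   number.  At level 2j the fixed variables are the j high bits of x and of
   y, so a cofactor is an L x L block of the adjacency matrix, L = 2^(n-j)
   (section InterleavedLevels).  Sorting the nodes by left endpoint, the
   neighbours of X on its right form a run ending at [reach X], which is
   nondecreasing, so the matrix is a symmetric "staircase"
   (section UnitIntervalGraph).  This yields two bounds on the number of
   distinct blocks: O(N / L), since only blocks met by the staircase are
   nonconstant, and 2^O(L), since a block is determined by its staircase
   profile.  Taking the better bound at each level and summing gives
   O(N / log N) nodes (the final estimates). *)

From HB Require Import structures.
From mathcomp Require Import all_boot all_order all_algebra.
From mathcomp Require Import zify lra ring.
Set Implicit Arguments. Unset Strict Implicit. Unset Printing Implicit Defensive.
Import Order.TTheory GRing.Theory Num.Theory.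

(* A function F of K variables has a pi-OBDD whose level-k inner nodes are the
   distinct cofactors of F obtained by fixing the first k variables of pi (the
   quasi-reduced OBDD). *)
Section QuasiReducedObdd.
Variables (V : finType) (rk : V -> nat) (K : nat) (vs : nat -> V).
Variable F : (V -> bool) -> bool.
Hypothesis K_gt0 : 0 < K.
Hypothesis rk_vs : forall k, k < K -> rk (vs k) = k.
Hypothesis rk_lt : forall v, rk v < K.
Hypothesis vs_rk : forall v, vs (rk v) = v.
Hypothesis F_ext : forall z z', (forall v, z v = z' v) -> F z = F z'.

Definition assignment := {ffun V -> bool}.
Definition boolfun := {ffun assignment -> bool}.

Definition overlay (k : nat) (w z : assignment) : V -> bool :=
  fun v => if rk v < k then w v else z v.

Definition cofactor k (w : assignment) : boolfun := [ffun z => F (overlay k w z)].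
Definition cofactors k : {set boolfun} := [set cofactor k w | w : assignment].

Lemma cofactor_in k w : cofactor k w \in cofactors k.
Proof. by apply/imsetP; exists w. Qed.

Definition update (z : assignment) (v : V) (b : bool) : assignment :=
  [ffun u => if u == v then b else z u].

Definition branch (k : nat) (g : boolfun) (b : bool) : boolfun :=
  [ffun z => g (update z (vs k) b)].

Lemma update_id (w : assignment) v : update w v (w v) = w.
Proof. by apply/ffunP => u; rewrite ffunE; case: eqP => // ->. Qed.

Lemma branch_cofactor k w b : k < K ->
  branch k (cofactor k w) b = cofactor k.+1 (update w (vs k) b).
Proof.
move=> kK; apply/ffunP => z; rewrite !ffunE; apply: F_ext => v.
rewrite /overlay !ffunE.
have [->|nvk] := eqVneq v (vs k); first by rewrite rk_vs // ltnn ltnSn.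
have nk : rk v != k by apply: contra_neq nvk => <-; rewrite vs_rk.
by rewrite ltnS [rk v <= k]leq_eqVlt (negbTE nk).
Qed.

Lemma cofactorS k w : k < K -> cofactor k.+1 w = branch k (cofactor k w) (w (vs k)).
Proof. by move=> kK; rewrite branch_cofactor // update_id. Qed.

Lemma cofactor0 w w' : cofactor 0 w = cofactor 0 w'.
Proof. by apply/ffunP => z; rewrite !ffunE. Qed.

Lemma cofactor_const k w z z' : K <= k -> cofactor k w z = cofactor k w z'.
Proof.
by move=> Kk; rewrite !ffunE; apply: F_ext => v; rewrite /overlay (leq_trans (rk_lt v) Kk).
Qed.

Lemma branch_in k g b : k < K -> g \in cofactors k -> branch k g b \in cofactors k.+1.
Proof. by move=> kK /imsetP[w _ ->]; rewrite branch_cofactor //; apply: cofactor_in. Qed.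

Lemma card_cofactorsS k : k < K -> #|cofactors k.+1| <= 2 * #|cofactors k|.
Proof.
move=> kK.
have sub : cofactors k.+1 \subset
           [set branch k gb.1 gb.2 | gb in setX (cofactors k) [set: bool]].
  apply/subsetP => g /imsetP[w _ ->]; rewrite cofactorS //.
  by apply/imsetP; exists (cofactor k w, w (vs k)) => //; rewrite !inE cofactor_in.
apply: leq_trans (subset_leq_card sub) _.
by rewrite (leq_trans (leq_imset_card _ _)) // cardsX cardsT card_bool mulnC.
Qed.

Definition label := ('I_K * boolfun)%type.
Definition labels : {set label} := [set u : label | u.2 \in cofactors u.1].
Definition all_false : assignment := [ffun _ => false].
Definition root_label : label := (Ordinal K_gt0, cofactor 0 all_false).

Lemma root_label_in : root_label \in labels.
Proof. by rewrite inE cofactor_in. Qed.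

Definition nnodes := #|labels|.
Definition node_of (u : label) : 'I_nnodes := enum_rank_in root_label_in u.
Definition label_of (i : 'I_nnodes) : label := @enum_val _ (pred_of_set labels) i.

Lemma node_ofK u : u \in labels -> label_of (node_of u) = u.
Proof. exact: enum_rankK_in. Qed.

Lemma label_ofK i : node_of (label_of i) = i.
Proof. exact: enum_valK_in. Qed.

Definition target (u : label) (b : bool) : (bool + 'I_nnodes)%type :=
  match insub (u.1 : nat).+1 with
  | Some k' => inr (node_of (k', branch u.1 u.2 b))
  | None => inl (branch u.1 u.2 b all_false)
  end.

Definition qr_obdd : obdd V nnodes :=
  Obdd (fun i => vs (label_of i).1) (fun i => target (label_of i) false)
       (fun i => target (label_of i) true) (inr (node_of root_label)).

Lemma target_in u b (k' : 'I_K) : u \in labels -> k' = (u.1).+1 :> nat ->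
  (k', branch u.1 u.2 b) \in labels.
Proof.
case: u => k g; rewrite inE /= => gS ek'.
by rewrite inE /= ek'; apply: branch_in.
Qed.

Lemma eval_node fuel (u : label) (x : V -> bool) : u \in labels -> K - u.1 <= fuel ->
  ob_eval_ref qr_obdd fuel (inr (node_of u)) x = u.2 (finfun x).
Proof.
elim: fuel u => [|fuel IH] [k g] uN hf; first by move: hf (ltn_ord k) => /=; lia.
rewrite /= node_ofK //=.
set b := x (vs k).
have -> : (if b then target (k, g) true else target (k, g) false) = target (k, g) b.
  by case: b.
have update_x : update (finfun x) (vs k) b = finfun x.
  by apply/ffunP => v; rewrite !ffunE; case: eqP => // ->.
rewrite /target /=; case: insubP => [k' _ ek'|nk].
  rewrite IH ?(target_in b uN) //=; last by rewrite ek'; move: hf => /=; lia.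
  by rewrite ffunE update_x.
have eK : k.+1 = K by move: nk (ltn_ord k); lia.
move: uN; rewrite inE /= => /imsetP[w _ ->].
rewrite /= branch_cofactor // (cofactor_const _ _ (finfun x)) ?eK //.
have -> : cofactor K (update w (vs k) b) = branch k (cofactor k w) b.
  by rewrite branch_cofactor // eK.
rewrite /= ffunE update_x.
by case: fuel {IH hf}.
Qed.

Lemma K_le_nnodes : K <= nnodes.
Proof.
have sub : [set (k, cofactor k all_false) | k : 'I_K] \subset labels.
  by apply/subsetP => u /imsetP[k _ ->]; rewrite inE cofactor_in.
apply: leq_trans (subset_leq_card sub); rewrite card_imset ?card_ord //.
by move=> k1 k2 [].
Qed.

Lemma qr_obdd_represents : represents qr_obdd F.
Proof.
move=> x; rewrite /ob_eval /= eval_node ?root_label_in //; last first.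
  by rewrite /= subn0 K_le_nnodes.
by rewrite /= ffunE; apply: F_ext => v; rewrite /overlay ffunE.
Qed.

Lemma qr_obdd_reachable (k : nat) (hk : k < K) w :
  connect (ob_edge qr_obdd) (ob_root qr_obdd) (inr (node_of (Ordinal hk, cofactor k w))).
Proof.
elim: k hk w => [|k IH] hk w.
  by rewrite /= (cofactor0 w all_false) (_ : Ordinal hk = Ordinal K_gt0) //; apply: val_inj.
have hk' : k < K by apply: ltnW.
apply: connect_trans (IH hk' w) (connect1 _).
have uN : (Ordinal hk', cofactor k w) \in labels by rewrite inE cofactor_in.
rewrite /= node_ofK // /target /= (insubT (fun i => i < K) hk) /= (cofactorS w hk').
by case: (w (vs k)); apply/orP; [right|left];
   apply/eqP; congr (inr (node_of (_, _))); apply: val_inj.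
Qed.

Lemma qr_obdd_pi : is_pi_obdd rk qr_obdd.
Proof.
split.
  move=> i; have : label_of i \in labels by apply: enum_valP.
  case E: (label_of i) => [k g]; rewrite inE /= => /imsetP[w _ eg].
  have -> : i = node_of (Ordinal (ltn_ord k), cofactor k w).
    by rewrite -[i]label_ofK E eg; congr (node_of (_, _)); apply: val_inj.
  exact: qr_obdd_reachable.
move=> i j /=; have iN : label_of i \in labels by apply: enum_valP.
suff lt_target b : target (label_of i) b = inr j ->
    rk (vs (label_of i).1) < rk (vs (label_of j).1) by case=> /lt_target.
rewrite /target; case: insubP => [k' _ ek'|] // [<-].
by rewrite node_ofK ?target_in //= !rk_vs // ek'.
Qed.

Lemma nnodes_le : nnodes <= \sum_(k < K) #|cofactors k|.
Proof.
rewrite /nnodes -sum1_card.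
rewrite (eq_bigl (fun u : label => u.2 \in cofactors u.1)); last by move=> u; rewrite inE.
rewrite -(pair_big_dep xpredT (fun (k : 'I_K) g => g \in cofactors k) (fun _ _ => 1)) /=.
by apply: leq_sum => k _; rewrite sum1_card.
Qed.

Theorem quasi_reduced_obdd : exists (m : nat) (B : obdd V m),
  [/\ is_pi_obdd rk B, represents B F & m <= \sum_(k < K) #|cofactors k|].
Proof. by exists nnodes, qr_obdd; split; [apply: qr_obdd_pi | apply: qr_obdd_represents | apply: nnodes_le]. Qed.

End QuasiReducedObdd.

Lemma sum_ord_split (f : nat -> nat) l m n : l + m = n ->
  \sum_(i < n) f i = \sum_(i < l) f i + \sum_(i < m) f (l + i).
Proof. by move=> <-; rewrite big_split_ord. Qed.

Lemma sum_ord_const1 n : \sum_(i < n) 1 = n.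
Proof. by rewrite sum_nat_const card_ord muln1. Qed.

Lemma sum_indicator_le (P : nat -> bool) n : \sum_(i < n) (P i : nat) <= n.
Proof. by rewrite -[leqRHS]sum_ord_const1; apply: leq_sum => i _; apply: leq_b1. Qed.

Lemma count_downclosed (P : nat -> bool) N Y :
  (forall i j, i <= j -> j < N -> P j -> P i) -> Y < N ->
  (Y < \sum_(i < N) (P i : nat)) = P Y.
Proof.
move=> Pdown YN; rewrite (sum_ord_split (fun i => (P i : nat)) (subnKC YN)) big_ord_recr /=.
case PY: (P Y).
  have -> : \sum_(i < Y) (P i : nat) = Y.
    by rewrite -[RHS]sum_ord_const1; apply: eq_bigr => i _; rewrite (Pdown i Y) // ltnW.
  lia.
have -> : \sum_(i < N - Y.+1) (P (Y.+1 + i) : nat) = 0.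
  apply: big1 => i _; case Pi: (P _) => //.
  by move: PY; rewrite (Pdown Y (Y.+1 + i)) // ?leq_addr //; move: (ltn_ord i); lia.
by rewrite !addn0 ltnNge sum_indicator_le.
Qed.

Lemma count_interval (Q lo hi : nat) : \sum_(q < Q) (lo <= q <= hi : nat) <= hi.+1 - lo.
Proof.
suff -> : \sum_(q < Q) (lo <= q <= hi : nat) = minn Q hi.+1 - lo by lia.
elim: Q => [|Q IH]; first by rewrite big_ord0.
rewrite big_ord_recr /= IH; case: (boolP (lo <= Q)) => h1; case: (boolP (Q <= hi)) => h2 /=; lia.
Qed.

Lemma count_eq_le1 (Q r : nat) : \sum_(q < Q) ((q : nat) == r : nat) <= 1.
Proof.
rewrite (eq_bigr (fun q : 'I_Q => (r <= q <= r : nat))); last first.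
  by move=> q _; rewrite -eqn_leq eq_sym.
by rewrite -[leqRHS](subSnn r) count_interval.
Qed.

Lemma sum_indicator_prefix (g : nat -> nat) (Q P : nat) :
  \sum_(p < Q) ((p < P) * g p) <= \sum_(p < P) g p.
Proof.
case: (leqP Q P) => h.
  apply: leq_trans (_ : \sum_(p < Q) g p <= _).
    by apply: leq_sum => p _; case: (p < P); rewrite ?mul1n ?mul0n.
  by rewrite [leqRHS](sum_ord_split g (subnKC h)) leq_addr.
rewrite (sum_ord_split (fun p => (p < P) * g p) (subnKC (ltnW h))).
rewrite [X in _ + X]big1 ?addn0; last by move=> i _; rewrite ltnNge leq_addr.
by apply: leq_sum => p _; rewrite ltn_ord mul1n.
Qed.

Lemma sum_halvings_le (K x : nat) : \sum_(k < K) x %/ 2 ^ k.+1 <= x.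
Proof.
elim: K x => [|K IH] x; first by rewrite big_ord0.
rewrite big_ord_recl /=.
have -> : \sum_(i < K) x %/ 2 ^ (bump 0 i).+1 = \sum_(i < K) (x %/ 2) %/ 2 ^ i.+1.
  by apply: eq_bigr => i _; rewrite /bump /= add1n expnS divnMA.
apply: leq_trans (leq_add (leqnn _) (IH _)) _.
by rewrite expn1; have := divn_eq x 2; lia.
Qed.

Lemma binary_lt (f : nat -> bool) l : \sum_(i < l) f i * 2 ^ i < 2 ^ l.
Proof.
elim: l => [|l IH]; first by rewrite big_ord0.
rewrite big_ord_recr /= expnS.
case: (f l) => /=; rewrite mul2n -addnn ?mul1n ?mul0n ?addn0 ?ltn_add2r //.
by apply: (leq_trans IH); rewrite leq_addr.
Qed.

Lemma sum_double (s : nat -> nat) n :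
  \sum_(k < n.*2) s k = \sum_(j < n) (s j.*2 + s j.*2.+1).
Proof.
elim: n => [|n IH]; first by rewrite !big_ord0.
by rewrite doubleS !big_ord_recr /= IH addnA.
Qed.

Lemma card_imset_factor (T U W : finType) (f : T -> U) (g : T -> W) (A : {pred T}) :
  (forall a b, g a = g b -> f a = f b) -> #|f @: A| <= #|g @: A|.
Proof.
move=> fg; case: (pickP A) => [a0 a0A|A0]; last first.
  by apply: leq_trans (leq_imset_card _ _) _; rewrite eq_card0.
pose h (u : U) := g (odflt a0 [pick a in A | f a == u]).
have hP a : a \in A -> exists2 b, b \in A & (h (f a) = g b /\ f b = f a).
  move=> aA; rewrite /h; case: pickP => [b /andP[bA /eqP fb]|/(_ a)] /=.
    by exists b.
  by rewrite aA eqxx.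
have -> : #|f @: A| = #|h @: (f @: A)|.
  apply/esym/card_in_imset => u1 u2 /imsetP[a1 a1A ->] /imsetP[a2 a2A ->].
  case: (hP a1 a1A) => b1 _ [-> <-]; case: (hP a2 a2A) => b2 _ [-> <-].
  exact: fg.
apply: subset_leq_card; apply/subsetP => w /imsetP[u /imsetP[a aA ->] ->].
by case: (hP a aA) => b bA [-> _]; apply: imset_f.
Qed.

(* a nondecreasing sequence c on [0, L) is determined by the set of values
   i + c i, since i |-> i + c i is strictly increasing *)
Lemma shifted_graph_inj (L : nat) (c c' : nat -> nat) :
  (forall i j, i <= j -> j < L -> c i <= c j) ->
  (forall i j, i <= j -> j < L -> c' i <= c' j) ->
  (forall i, i < L -> exists2 j, j < L & i + c i = j + c' j) ->
  (forall i, i < L -> exists2 j, j < L & i + c' i = j + c j) ->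
  forall i, i < L -> c i = c' i.
Proof.
move=> mc mc' h1 h2; elim/ltn_ind => i IH iL.
case: (h1 i iL) => j jL e.
case: (ltngtP j i) => ji.
- by have := IH j ji; have := mc j i (ltnW ji) iL; lia.
- case: (h2 i iL) => k kL e2.
  have := mc' i j (ltnW ji) jL.
  case: (ltnP k i) => ki.
    by have := IH k ki; have := mc' k i (ltnW ki) iL; lia.
  by have := mc i k ki kL; lia.
- by move: e; rewrite ji; lia.
Qed.

(* With the nodes sorted by left endpoint, the
   neighbours of X to its right form a contiguous run X+1 .. reach X - 1;
   [reach] is nondecreasing in X.  Hence the adjacency matrix, cut into L x L
   blocks, has few nonconstant blocks (those met by the staircase boundary)
   and each block is described by O(L) bits. *)
Section UnitIntervalGraph.
Variables (R : realFieldType) (N : nat) (a : nat -> R).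
Hypothesis N_gt0 : 0 < N.
Hypothesis a_incr : forall i j, i < j < N -> (a i < a j)%R.

Definition adj X Y := [&& X < N, Y < N & uig_adj a X Y].

Definition reach X := \sum_(i < N) ((a i <= a (minn X N.-1) + 1)%R : nat).

Lemma a_le i j : i <= j -> j < N -> (a i <= a j)%R.
Proof.
rewrite leq_eqVlt => /orP[/eqP -> //|ij] jN.
by apply: ltW; apply: a_incr; rewrite ij jN.
Qed.

Lemma reach_mono X Y : X <= Y -> reach X <= reach Y.
Proof.
move=> XY; apply: leq_sum => i _.
have h : (a (minn X N.-1) <= a (minn Y N.-1))%R by apply: a_le; lia.
case: (boolP (a i <= _)%R) => // h1.
by have -> : (a i <= a (minn Y N.-1) + 1)%R by lra.
Qed.

Lemma reach_le X : reach X <= N.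
Proof. exact: (sum_indicator_le (fun i => (a i <= a (minn X N.-1) + 1)%R)). Qed.

Lemma reachP X Y : X < Y -> Y < N -> (Y < reach X) = (a Y <= a X + 1)%R.
Proof.
move=> XY YN; rewrite /reach (_ : minn X N.-1 = X); last by lia.
rewrite (@count_downclosed (fun i => (a i <= a X + 1)%R)) // => i j ij jN h.
by have := a_le ij jN; lra.
Qed.

Lemma adjC X Y : adj X Y = adj Y X.
Proof. by rewrite /adj /uig_adj eq_sym distrC; case: (X < N); case: (Y < N). Qed.

Lemma adjE X Y : adj X Y = [&& X < N, Y < N, X != Y & maxn X Y < reach (minn X Y)].
Proof.
wlog XY : X Y / X <= Y.
  move=> hw; case: (boolP (X <= Y)) => h; first exact: hw.
  rewrite adjC hw; last by lia.
  by rewrite maxnC minnC eq_sym; case: (X < N); case: (Y < N).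
rewrite /adj /uig_adj.
case: (boolP (X < N)) => //= XN; case: (boolP (Y < N)) => //= YN.
case: (eqVneq X Y) => //= nXY.
have lt : X < Y by lia.
rewrite (maxn_idPr XY) (minn_idPl XY) reachP //.
have := a_incr (i:=X) (j:=Y); rewrite lt YN => /(_ isT) h.
by rewrite distrC ger0_norm; [apply/idP/idP; lra | lra].
Qed.

Section Blocks.
Variables (L Q : nat).
Hypothesis L_gt0 : 0 < L.

Definition block (p q : nat) : {ffun 'I_L * 'I_L -> bool} :=
  [ffun xy : 'I_L * 'I_L => adj (p * L + xy.1) (q * L + xy.2)].
Definition blocks := [set block pq.1 pq.2 | pq : 'I_Q * 'I_Q].
Definition block0 : {ffun 'I_L * 'I_L -> bool} := [ffun _ => false].
Definition block1 : {ffun 'I_L * 'I_L -> bool} := [ffun _ => true].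

Definition nfull := N %/ L.
Definition reach_block p := reach (p * L) %/ L.

(* the boundary of the staircase crosses block (p, q), p < q *)
Definition crosses p q := [&& p < nfull, reach (p * L) < q.+1 * L & q * L < reach (p.+1 * L)].

(* blocks on the diagonal or on the last (incomplete) row or column *)
Definition border p q :=
  [|| ((p : nat) == q) && (p <= nfull), (p == nfull) && (q <= nfull) | (q == nfull) && (p <= nfull)].

Lemma block_has_true p q : block p q != block0 ->
  exists x y, [/\ x < L, y < L & adj (p * L + x) (q * L + y)].
Proof.
move=> h; have /existsP[[x y]] : [exists xy, block p q xy].
  apply: contraNT h => /existsPn hn; apply/eqP/ffunP => xy.
  by rewrite [RHS]ffunE; apply/negbTE.
by rewrite ffunE => g; exists x, y.
Qed.

Lemma block_has_false p q : block p q != block1 ->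
  exists x y, [/\ x < L, y < L & ~~ adj (p * L + x) (q * L + y)].
Proof.
move=> h; have /existsP[[x y]] : [exists xy, ~~ block p q xy].
  apply: contraNT h => /existsPn hn; apply/eqP/ffunP => xy.
  by rewrite [RHS]ffunE; apply/negPn.
by rewrite ffunE => g; exists x, y.
Qed.

Lemma le_nfull p : p * L < N -> p <= nfull.
Proof. by move=> h; rewrite /nfull leq_divRL // ltnW. Qed.

Lemma mixed_block_crosses s r x y x' y' : s < r -> r < nfull ->
  x < L -> y < L -> x' < L -> y' < L ->
  adj (s * L + x) (r * L + y) -> ~~ adj (s * L + x') (r * L + y') -> crosses s r.
Proof.
move=> sr rP xL yL x'L y'L.
have h1 : s.+1 * L <= r * L by rewrite leq_mul2r sr orbT.
have h2 : r.+1 * L <= nfull * L by rewrite leq_mul2r rP orbT.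
have h3 : nfull * L <= N := leq_divM N L.
move: h1 h2; rewrite !mulSn => h1 h2.
rewrite !adjE.
rewrite (maxn_idPr (_ : s * L + x <= r * L + y)); last by lia.
rewrite (minn_idPl (_ : s * L + x <= r * L + y)); last by lia.
rewrite (maxn_idPr (_ : s * L + x' <= r * L + y')); last by lia.
rewrite (minn_idPl (_ : s * L + x' <= r * L + y')); last by lia.
case/and4P => _ _ _ t1.
have A : s * L + x' < N by lia.
have B : r * L + y' < N by lia.
have C : s * L + x' != r * L + y' by apply/eqP; lia.
rewrite A B C /= -leqNgt => t2.
have m1 := @reach_mono (s * L + x) (L + s * L) ltac:(lia).
have m2 := @reach_mono (s * L) (s * L + x') ltac:(lia).
rewrite /crosses !mulSn; apply/and3P; split; lia.
Qed.

Lemma nonconstant_block p q : block p q != block0 -> block p q != block1 ->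
  [|| border p q, crosses p q | crosses q p].
Proof.
case/block_has_true => x [y [xL yL g1]]; case/block_has_false => x' [y' [x'L y'L g2]].
have [pN qN] : p * L < N /\ q * L < N by move: g1; rewrite /adj => /and3P[h1 h2 _]; lia.
have pP := le_nfull pN; have qP := le_nfull qN.
rewrite /border.
case: (eqVneq p q) => [->|pq]; first by rewrite qP.
case: (eqVneq p nfull) => [->|pnP]; first by rewrite qP orbT.
case: (eqVneq q nfull) => [->|qnP]; first by rewrite pP !orbT.
have pP' : p < nfull by lia.
have qP' : q < nfull by lia.
case: (ltngtP p q) => h.
- by rewrite (mixed_block_crosses h qP' xL yL x'L y'L g1 g2) !orbT.
- rewrite adjC in g1; rewrite adjC in g2.
  by rewrite (mixed_block_crosses h pP' yL xL y'L x'L g1 g2) !orbT.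
- by move: pq; rewrite h eqxx.
Qed.

Lemma crosses_range p q : crosses p q -> (p < nfull) && (reach_block p <= q <= reach_block p.+1).
Proof.
case/and3P => pP h1 h2; rewrite pP /reach_block /=.
by apply/andP; split; [rewrite -ltnS ltn_divLR | rewrite leq_divRL // ltnW].
Qed.

Lemma reach_block_mono : {homo reach_block : x y / x <= y}.
Proof. by move=> x y xy; apply/leq_div2r/reach_mono; rewrite leq_mul2r xy orbT. Qed.

(* the staircase crosses at most 2 N / L blocks: row p contributes at most
   reach_block (p+1) - reach_block p + 1, and these differences telescope *)
Lemma count_crossed : \sum_(p < Q) \sum_(q < Q) (crosses p q : nat) <= N %/ L + nfull.
Proof.
apply: leq_trans (_ : \sum_(p < Q) ((p < nfull) * ((reach_block p.+1).+1 - reach_block p)) <= _).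
  apply: leq_sum => p _.
  apply: leq_trans (_ : \sum_(q < Q) ((p < nfull) * (reach_block p <= q <= reach_block p.+1)) <= _).
    apply: leq_sum => q _.
    by case: (boolP (crosses p q)) => // /crosses_range /andP[-> ->].
  by rewrite -big_distrr /= leq_mul2l count_interval orbT.
apply: leq_trans (sum_indicator_prefix (fun p => (reach_block p.+1).+1 - reach_block p) Q nfull) _.
have e p : (reach_block p.+1).+1 - reach_block p = (reach_block p.+1 - reach_block p) + 1.
  by have := reach_block_mono (leqnSn p); lia.
under eq_bigr => p _ do rewrite e.
rewrite big_split /= sum_ord_const1.
rewrite -(big_mkord xpredT (fun p => reach_block p.+1 - reach_block p)).
rewrite telescope_sumn; last exact: reach_block_mono.
have : reach_block nfull <= N %/ L by rewrite /reach_block leq_div2r // reach_le.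
lia.
Qed.

Lemma count_border : \sum_(p < Q) \sum_(q < Q) (border p q : nat) <= 3 * nfull.+1.
Proof.
have row r : \sum_(p < Q) \sum_(q < Q) (((p : nat) == r) && (q <= nfull) : nat) <= nfull.+1.
  apply: leq_trans (_ : \sum_(p < Q) ((p : nat) == r) * nfull.+1 <= _).
    apply: leq_sum => p _; under eq_bigr => q _ do rewrite -mulnb.
    rewrite -big_distrr /= leq_mul2l.
    by case: eqP => //= _; apply: (count_interval Q 0 nfull).
  by rewrite -big_distrl /= -[leqRHS]mul1n leq_mul2r count_eq_le1 orbT.
have diag : \sum_(p < Q) \sum_(q < Q) (((p : nat) == q) && (p <= nfull) : nat) <= nfull.+1.
  apply: leq_trans (_ : \sum_(p < Q) (0 <= p <= nfull : nat) <= _); last first.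
    exact: (count_interval Q 0 nfull).
  apply: leq_sum => p _; under eq_bigr => q _ do rewrite -mulnb mulnC eq_sym.
  rewrite -big_distrr /=; case: (p <= nfull); rewrite ?mul0n ?mul1n //.
  exact: count_eq_le1.
have col := row nfull; rewrite exchange_big /= in col.
apply: leq_trans (_ : \sum_(p < Q) \sum_(q < Q)
    ((((p : nat) == q) && (p <= nfull) : nat) + (((p : nat) == nfull) && (q <= nfull) : nat)
     + (((q : nat) == nfull) && (p <= nfull) : nat)) <= _).
  by apply: leq_sum => p _; apply: leq_sum => q _; rewrite /border;
     do 3 case: (_ && _).
rewrite (eq_bigr _ (fun p _ => big_split _ _ _ _ _)) big_split /=.
rewrite (eq_bigr _ (fun p _ => big_split _ _ _ _ _)) big_split /=.
by apply: leq_trans (leq_add (leq_add diag (row nfull)) col) _; lia.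
Qed.

Lemma count_nonconstant_blocks :
  #|[set pq : 'I_Q * 'I_Q | (block pq.1 pq.2 != block0) && (block pq.1 pq.2 != block1)]|
    <= 7 * (N %/ L) + 3.
Proof.
rewrite -sum1_card big_mkcond /=.
rewrite (eq_bigr (fun pq : 'I_Q * 'I_Q =>
   (((block pq.1 pq.2 != block0) && (block pq.1 pq.2 != block1)) : nat))); last first.
  by move=> pq _; rewrite inE; case: (_ && _).
rewrite -(pair_big xpredT xpredT (fun p q : 'I_Q =>
   (((block p q != block0) && (block p q != block1)) : nat))) /=.
apply: leq_trans (_ : \sum_(p < Q) \sum_(q < Q)
   ((border p q : nat) + crosses p q + crosses q p) <= _).
  apply: leq_sum => p _; apply: leq_sum => q _.
  case: (boolP (_ && _)) => // /andP[h1 h2].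
  by move: (nonconstant_block h1 h2); case: border; case: crosses; case: crosses.
rewrite (eq_bigr _ (fun p _ => big_split _ _ _ _ _)) big_split /=.
rewrite (eq_bigr _ (fun p _ => big_split _ _ _ _ _)) big_split /=.
have S1 := count_border; have S2 := count_crossed.
have S3 : \sum_(p < Q) \sum_(q < Q) (crosses q p : nat) <= N %/ L + nfull.
  by rewrite exchange_big.
by apply: leq_trans (leq_add (leq_add S1 S2) S3) _; rewrite /nfull; lia.
Qed.

Lemma card_blocks_few : #|blocks| <= 7 * (N %/ L) + 5.
Proof.
set NC := [set pq : 'I_Q * 'I_Q | (block pq.1 pq.2 != block0) && (block pq.1 pq.2 != block1)].
have sub : blocks \subset block0 |: (block1 |: [set block pq.1 pq.2 | pq : 'I_Q * 'I_Q in NC]).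
  apply/subsetP => f /imsetP[pq _ ->].
  rewrite !inE; case: eqP => //= h1; case: eqP => //= h2.
  by apply/imsetP; exists pq => //; rewrite inE; apply/andP; split; apply/eqP.
apply: leq_trans (subset_leq_card sub) _; rewrite cardsU1 cardsU1.
apply: leq_trans (_ : 1 + (1 + (7 * (N %/ L) + 3)) <= _); last lia.
rewrite !leq_add ?leq_b1 //.
exact: leq_trans (leq_imset_card _ _) count_nonconstant_blocks.
Qed.

(* Second bound: the block (p, q) is determined by whether p = q or p < q,
   the numbers of valid (i.e. < N) indices in rows and columns, and the
   staircase inside the block, i.e. the nondecreasing sequence [stair p q]
   encoded by the set { i + stair p q i | i < L } of size at most 2L + 1. *)
Definition stair p q (i : nat) := minn (reach (minn p q * L + i) - maxn p q * L) L.
Definition valid p := minn (N - p * L) L.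
Definition stair_code p q : {ffun 'I_(L.*2).+1 -> bool} :=
  [ffun t : 'I_(L.*2).+1 => [exists i : 'I_L, (t : nat) == i + stair p q i]].
Definition block_key p q :=
  (p == q, p < q, inord (valid p) : 'I_L.+1, inord (valid q) : 'I_L.+1, stair_code p q).

Lemma blockE p q x y : x < L -> y < L ->
  adj (p * L + x) (q * L + y) =
  [&& x < valid p, y < valid q &
     (if p == q then (x != y) && (maxn x y < stair p q (minn x y))
      else if p < q then y < stair p q x else x < stair p q y)].
Proof.
move=> xL yL; rewrite adjE /stair /valid.
have -> : (p * L + x < N) = (x < minn (N - p * L) L) by lia.
have -> : (q * L + y < N) = (y < minn (N - q * L) L) by lia.
congr (_ && (_ && _)).
case: (ltngtP p q) => pq.
- have : p.+1 * L <= q * L by rewrite leq_mul2r pq orbT.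
  rewrite mulSn => h.
  rewrite (maxn_idPr (_ : p * L + x <= q * L + y)); last by lia.
  rewrite (minn_idPl (_ : p * L + x <= q * L + y)); last by lia.
  have -> : (p * L + x != q * L + y) = true by apply/eqP; lia.
  rewrite /=; lia.
- have : q.+1 * L <= p * L by rewrite leq_mul2r pq orbT.
  rewrite mulSn => h.
  rewrite (maxn_idPl (_ : q * L + y <= p * L + x)); last by lia.
  rewrite (minn_idPr (_ : q * L + y <= p * L + x)); last by lia.
  have -> : (p * L + x != q * L + y) = true by apply/eqP; lia.
  rewrite /=; lia.
- rewrite pq -addn_maxr -addn_minr eqn_add2l.
  by case: (x != y) => //=; lia.
Qed.

Lemma stair_le p q i : stair p q i <= L.
Proof. exact: geq_minr. Qed.

Lemma stair_mono p q i j : i <= j -> stair p q i <= stair p q j.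
Proof.
move=> ij; have := @reach_mono (minn p q * L + i) (minn p q * L + j).
by rewrite leq_add2l /stair => /(_ ij); lia.
Qed.

Lemma stair_codeP p q t : t < (L.*2).+1 ->
  stair_code p q (inord t) = [exists i : 'I_L, t == i + stair p q i].
Proof. by move=> tL; rewrite ffunE inordK. Qed.

Lemma stair_code_in p q i : i < L -> stair_code p q (inord (i + stair p q i)).
Proof.
move=> iL; rewrite stair_codeP; last by have := stair_le p q i; lia.
by apply/existsP; exists (Ordinal iL).
Qed.

Lemma stair_code_out p q t : t < (L.*2).+1 -> stair_code p q (inord t) ->
  exists2 j, j < L & t = j + stair p q j.
Proof. by move=> tL; rewrite stair_codeP // => /existsP[j /eqP e]; exists j. Qed.

Lemma stair_code_inj p q p' q' : stair_code p q = stair_code p' q' ->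
  forall i, i < L -> stair p q i = stair p' q' i.
Proof.
move=> e; apply: shifted_graph_inj => [i j ij _|i j ij _|i iL|i iL]; try exact: stair_mono.
- have := stair_code_in p q iL; rewrite e => /stair_code_out; apply.
  by have := stair_le p q i; lia.
- have := stair_code_in p' q' iL; rewrite -e => /stair_code_out.
  by case=> [|j jL ->]; [have := stair_le p' q' i; lia | exists j].
Qed.

Lemma block_key_det p q p' q' : block_key p q = block_key p' q' -> block p q = block p' q'.
Proof.
case=> e1 e2 e3 e4 e5.
have valid_inj r r' : inord (valid r) = inord (valid r') :> 'I_L.+1 -> valid r = valid r'.
  have h s : valid s < L.+1 by rewrite ltnS geq_minr.
  by move/(congr1 val); rewrite /= !inordK ?h.
have se := stair_code_inj e5.
apply/ffunP => [[x y]]; rewrite !ffunE /= !blockE // e1 e2 (valid_inj _ _ e3) (valid_inj _ _ e4).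
by rewrite !se // gtn_min ltn_ord.
Qed.

Lemma card_blocks_small : #|blocks| <= 4 * (L.+1 * L.+1) * 2 ^ (L.*2).+1.
Proof.
apply: leq_trans (card_imset_factor (f := fun pq : 'I_Q * 'I_Q => block pq.1 pq.2)
   (g := fun pq : 'I_Q * 'I_Q => block_key pq.1 pq.2) _ _) _.
  by move=> [p q] [p' q'] /= /block_key_det.
apply: leq_trans (max_card _) _.
by rewrite !card_prod !card_bool !card_ord card_ffun card_bool card_ord; lia.
Qed.

End Blocks.
End UnitIntervalGraph.

(* After fixing the
   j most significant bits of both x and y (level 2j), the remaining function
   of the low n - j bits of x and y is a block of side 2^(n-j) of the
   adjacency matrix, selected by the fixed high bits. *)
Section InterleavedLevels.
Variables (R : realFieldType) (N : nat) (a : nat -> R).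
Local Notation n := (nbits N).
Hypothesis n_gt0 : 0 < n.
Local Notation rk := (@interleaved_rank n).
Local Notation F := (@chiE R a N).

Definition interleaved_var (k : nat) : xyvar n :=
  (odd k, insubd (Ordinal n_gt0) (n.-1 - k./2)).

Lemma rank_var k : k < n.*2 -> rk (interleaved_var k) = k.
Proof.
move=> kn; rewrite /interleaved_rank /interleaved_var /= val_insubd.
have -> : n.-1 - k./2 < n by lia.
have := odd_double_half k; have : k./2 < n.
  by rewrite -ltn_double; have := odd_double_half k; lia.
lia.
Qed.

Lemma rank_lt v : rk v < n.*2.
Proof. by case: v => b i; rewrite /interleaved_rank /=; move: (ltn_ord i); case: b => /=; lia. Qed.

Lemma var_rank v : interleaved_var (rk v) = v.
Proof.
case: v => b i; rewrite /interleaved_var /interleaved_rank /=.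
rewrite oddD odd_double /= addnC half_bit_double.
congr (_, _); first by case: b.
by apply: val_inj; rewrite val_insubd; have h := ltn_ord i; case: ifP => /= h2; lia.
Qed.

Lemma chiE_ext (z z' : xyvar n -> bool) : (forall v, z v = z' v) -> F z = F z'.
Proof.
move=> h; rewrite /chiE.
have e b : binval (fun i => z (b, i)) = binval (fun i => z' (b, i)).
  by apply: eq_bigr => i _; rewrite h.
by rewrite !e.
Qed.

Definition bit (z : xyvar n -> bool) (b : bool) (i : nat) : bool :=
  if (insub i : option 'I_n) is Some o then z (b, o) else false.

Lemma binval_bit z b : binval (fun o => z (b, o)) = \sum_(i < n) bit z b i * 2 ^ i.
Proof. by apply: eq_bigr => o _; rewrite /bit valK. Qed.

(* the first 2j variables are exactly the j most significant bits of x and y *)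
Lemma bit_overlay j (w z : assignment (xyvar n)) b i : j <= n ->
  bit (overlay rk j.*2 w z) b i = if n - j <= i then bit w b i else bit z b i.
Proof.
move=> jn; rewrite /bit; case: insubP => [o io eo|ni]; last by case: ifP.
rewrite /overlay /interleaved_rank /= -eo.
by have -> : ((n.-1 - o).*2 + b < j.*2) = (n - j <= o) by move: (ltn_ord o); case: b => /=; lia.
Qed.

Definition low_part j (z : xyvar n -> bool) b := \sum_(i < n - j) bit z b i * 2 ^ i.
Definition high_part j (w : xyvar n -> bool) b := \sum_(i < j) bit w b (n - j + i) * 2 ^ i.

Lemma low_part_lt j z b : low_part j z b < 2 ^ (n - j).
Proof. exact: binary_lt. Qed.

Lemma high_part_lt j w b : j <= n -> high_part j w b < 2 ^ n.
Proof.
move=> jn; apply: leq_trans (binary_lt (fun i => bit w b (n - j + i)) j) _.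
by rewrite leq_exp2l.
Qed.

Lemma binval_overlay j (w z : assignment (xyvar n)) b : j <= n ->
  \sum_(i < n) bit (overlay rk j.*2 w z) b i * 2 ^ i =
  high_part j w b * 2 ^ (n - j) + low_part j z b.
Proof.
move=> jn.
rewrite (sum_ord_split (fun i => bit (overlay rk j.*2 w z) b i * 2 ^ i) (subnK jn)) addnC.
congr (_ + _).
  rewrite /high_part big_distrl /=; apply: eq_bigr => i _.
  by rewrite bit_overlay // leq_addr expnD -mulnA [2 ^ i * _]mulnC.
apply: eq_bigr => i _; rewrite bit_overlay //.
by have -> : (n - j <= i) = false by move: (ltn_ord i); lia.
Qed.

Definition block_fun j (beta : {ffun 'I_(2 ^ (n - j)) * 'I_(2 ^ (n - j)) -> bool}) :
    boolfun (xyvar n) :=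
  [ffun z : assignment (xyvar n) =>
     beta (Ordinal (low_part_lt j z false), Ordinal (low_part_lt j z true))].

Lemma cofactor_even j w : j <= n ->
  cofactor rk F j.*2 w =
  block_fun (block N a (2 ^ (n - j)) (high_part j w false) (high_part j w true)).
Proof. by move=> jn; apply/ffunP => z; rewrite !ffunE /chiE /= !binval_bit !binval_overlay. Qed.

Lemma card_cofactors_even j : j <= n ->
  #|cofactors rk F j.*2| <= #|blocks N a (2 ^ (n - j)) (2 ^ n)|.
Proof.
move=> jn.
have sub : cofactors rk F j.*2 \subset block_fun (j := j) @: blocks N a (2 ^ (n - j)) (2 ^ n).
  apply/subsetP => g /imsetP[w _ ->]; rewrite cofactor_even //.
  apply/imset_f/imsetP.
  by exists (Ordinal (high_part_lt w false jn), Ordinal (high_part_lt w true jn)).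
exact: leq_trans (subset_leq_card sub) (leq_imset_card _ _).
Qed.

(* the quasi-reduced OBDD of chi_E has at most three nodes per block type:
   one at an even level and at most two below it *)
Lemma chiE_obdd : exists (m : nat) (B : obdd (xyvar n) m),
  [/\ is_pi_obdd rk B, represents B F &
      m <= 3 * \sum_(j < n) #|blocks N a (2 ^ j.+1) (2 ^ n)|].
Proof.
have n2_gt0 : 0 < n.*2 by rewrite double_gt0.
have [m [B [Bpi Brep Bm]]] := quasi_reduced_obdd n2_gt0 rank_var rank_lt var_rank chiE_ext.
exists m, B; split => //; apply: leq_trans Bm _.
rewrite (sum_double (fun k => #|cofactors rk F k|)) big_distrr /=.
rewrite [leqRHS](reindex_inj rev_ord_inj) /=; apply: leq_sum => j _.
have jn : j < n := ltn_ord j.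
have odd_level := card_cofactorsS rank_var var_rank chiE_ext (k := j.*2).
have := card_cofactors_even (ltnW jn).
rewrite (_ : (n - j.+1).+1 = n - j); last by lia.
move=> even_level; rewrite -[3]/(1 + 2) mulnDl mul1n leq_add //.
by apply: leq_trans (odd_level _) _; rewrite ?ltn_double // leq_mul2l even_level orbT.
Qed.

End InterleavedLevels.

(* With L = 2^l, level l contributes at most
   min (7 N / L + 5, 4 (L+1)^2 2^(2L+1)).  The second bound is used for
   l < i0 and the first for l >= i0, where 2^i0 is about (log N) / 64:
   the first part then costs N^(o(1)) and the second a geometric sum
   O(N / 2^i0) = O(N / log N). *)
Definition few_bound (N L : nat) := 7 * (N %/ L) + 5.
Definition small_bound (L : nat) := 4 * (L.+1 * L.+1) * 2 ^ (L.*2).+1.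
Definition level_bound N l := minn (few_bound N (2 ^ l)) (small_bound (2 ^ l)).

Lemma card_blocks_level (R : realFieldType) (N : nat) (a : nat -> R) l Q :
  0 < N -> (forall i j, i < j < N -> (a i < a j)%R) ->
  #|blocks N a (2 ^ l) Q| <= level_bound N l.
Proof.
move=> N_gt0 a_incr; rewrite leq_min.
by rewrite card_blocks_few ?card_blocks_small ?expn_gt0.
Qed.

Lemma small_bound_le L : small_bound L <= 8 * 2 ^ (4 * L).
Proof.
rewrite /small_bound.
have h : L.+1 <= 2 ^ L by apply: ltn_expl.
have -> : 2 ^ (L.*2).+1 = 2 * (2 ^ L * 2 ^ L) by rewrite expnS -expnD addnn.
have -> : 2 ^ (4 * L) = 2 ^ L * 2 ^ L * (2 ^ L * 2 ^ L).
  by rewrite -!expnD; congr (2 ^ _); lia.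
have := leq_mul (leq_mul h h) (leqnn (2 ^ L * 2 ^ L)); nia.
Qed.

Lemma sum_halvings_tail (x i0 n : nat) :
  \sum_(i < n) ((i0 <= i) * (x %/ 2 ^ i.+1)) <= x %/ 2 ^ i0.
Proof.
case: (leqP i0 n) => h; last first.
  by rewrite big1 // => i _; rewrite leqNgt (ltn_trans (ltn_ord i) h) mul0n.
rewrite (sum_ord_split (fun i => (i0 <= i) * (x %/ 2 ^ i.+1)) (subnKC h)).
rewrite big1 ?add0n => [|i _]; last by rewrite leqNgt ltn_ord mul0n.
apply: leq_trans (sum_halvings_le (n - i0) (x %/ 2 ^ i0)).
by apply: leq_sum => i _; rewrite leq_addr mul1n -addnS expnD divnMA.
Qed.

Lemma sum_level_bound N n i0 :
  \sum_(i < n) level_bound N i.+1 <= i0 * (8 * 2 ^ (4 * 2 ^ i0)) + 7 * (N %/ 2 ^ i0) + 5 * n.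
Proof.
set X := 8 * 2 ^ (4 * 2 ^ i0).
apply: leq_trans (_ : \sum_(i < n) ((i < i0) * X + ((i0 <= i) * (7 * (N %/ 2 ^ i.+1)) + 5)) <= _).
  apply: leq_sum => i _; rewrite /level_bound.
  case: (ltnP i i0) => h /=; last by rewrite mul1n mul0n add0n geq_minl.
  rewrite mul1n; apply: leq_trans (geq_minr _ _) _.
  apply: leq_trans (small_bound_le _) (leq_trans _ (leq_addr _ _)).
  by rewrite leq_mul2l leq_exp2l // leq_mul2l leq_exp2l.
rewrite big_split /= big_split /= sum_nat_const card_ord [5 * n]mulnC -addnA.
rewrite leq_add //.
  apply: leq_trans (sum_indicator_prefix (fun _ => X) n i0) _.
  by rewrite sum_nat_const card_ord.
rewrite leq_add2r; apply: leq_trans (_ : 7 * \sum_(i < n) ((i0 <= i) * (N %/ 2 ^ i.+1)) <= _).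
  by rewrite big_distrr /=; apply: leq_sum => i _; rewrite mulnCA.
by rewrite leq_mul2l sum_halvings_tail orbT.
Qed.

Lemma succ_le_exp16 t : t.+1 <= 16 * 2 ^ (t %/ 16).
Proof.
have h : t %/ 16 < 2 ^ (t %/ 16) by apply: ltn_expl.
by have := divn_eq t 16; have := ltn_pmod t (isT : 0 < 16); lia.
Qed.

Lemma exp16_pow k t : k <= 16 -> (2 ^ (t %/ 16)) ^ k <= 2 ^ t.
Proof. by move=> k16; rewrite -expnM leq_exp2l //; have := leq_divM t 16; nia. Qed.

Lemma quadratic_le_exp t : t.+1 * t <= 256 * 2 ^ t.
Proof.
have hE := succ_le_exp16 t; have E2 := @exp16_pow 2 t isT.
apply: leq_trans (leq_mul hE (ltnW hE)) _.
by move: E2; rewrite expnS expn1; nia.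
Qed.

(* the contribution of the levels below i0, times log N, is O(N) *)
Lemma head_le_exp t (i0 := trunc_log 2 t - 6) : i0 * 2 ^ (4 * 2 ^ i0) * t <= 256 * 2 ^ t.
Proof.
case: (posnP i0) => [->|i0_gt0]; first by rewrite !mul0n.
have t_gt0 : 0 < t by move: i0_gt0; rewrite /i0; case: (t).
have tl : 2 ^ (i0 + 6) <= t.
  apply: leq_trans (trunc_logP (isT : 1 < 2) t_gt0); rewrite leq_exp2l //; rewrite /i0; lia.
have i0t : i0 <= t.
  apply: leq_trans (ltnW (ltn_expl i0 (isT : 1 < 2))) (leq_trans _ tl).
  by rewrite leq_exp2l // leq_addr.
have hX : 2 ^ (4 * 2 ^ i0) <= 2 ^ (t %/ 16).
  by rewrite leq_exp2l // leq_divRL //; move: tl; rewrite expnD; lia.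
have ht : t <= 16 * 2 ^ (t %/ 16) := ltnW (succ_le_exp16 t).
have E3 := @exp16_pow 3 t isT; move: hX ht E3.
move: (2 ^ (t %/ 16)) (2 ^ (4 * 2 ^ i0)) => E X hX ht E3.
apply: leq_trans (_ : 16 * E * E * (16 * E) <= _).
  by rewrite !leq_mul // (leq_trans i0t ht).
have -> : 16 * E * E * (16 * E) = 256 * E ^ 3 by ring.
by rewrite leq_mul2l E3 orbT.
Qed.

(* the contribution of the levels from i0 on, times log N, is O(N) *)
Lemma tail_le t N (i0 := trunc_log 2 t - 6) : t * (N %/ 2 ^ i0) <= 128 * N.
Proof.
have tl : t < 2 ^ (i0 + 7).
  apply: leq_trans (trunc_log_ltn t (isT : 1 < 2)) _.
  by rewrite leq_exp2l // /i0; lia.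
apply: leq_trans (_ : 2 ^ (i0 + 7) * (N %/ 2 ^ i0) <= _); first by rewrite leq_mul2r ltnW ?orbT.
rewrite expnD (mulnC (2 ^ i0)) -mulnA.
have := leq_divM N (2 ^ i0); rewrite mulnC => h.
by rewrite (_ : 2 ^ 7 = 128) // leq_mul2l h orbT.
Qed.

Lemma nbits_le N : 2 <= N -> nbits N <= (trunc_log 2 N).+1.
Proof. by move=> N2; rewrite /nbits up_log_trunc_log ?ltnS ?leq_trunc_log //; lia. Qed.

Lemma total_bound N : 2 <= N ->
  (3 * \sum_(i < nbits N) level_bound N i.+1 + 2) * trunc_log 2 N <= 13 * 1000 * N.
Proof.
move=> N2; set t := trunc_log 2 N; set i0 := trunc_log 2 t - 6.
set X := 2 ^ (4 * 2 ^ i0); set D := N %/ 2 ^ i0.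
have tN : 2 ^ t <= N by apply: trunc_logP; lia.
have tN' : t <= N := leq_trans (ltnW (ltn_expl t (isT : 1 < 2))) tN.
have head : i0 * X * t <= 256 * 2 ^ t := head_le_exp t.
have tail : t * D <= 128 * N := tail_le t N.
have quad := quadratic_le_exp t.
have nt : nbits N * t <= t.+1 * t by rewrite leq_mul2r nbits_le ?orbT.
apply: leq_trans (_ : (3 * (i0 * (8 * X) + 7 * D + 5 * nbits N) + 2) * t <= _).
  by rewrite leq_mul2r leq_add2r leq_mul2l sum_level_bound !orbT.
have -> : (3 * (i0 * (8 * X) + 7 * D + 5 * nbits N) + 2) * t =
          24 * (i0 * X * t) + 21 * (t * D) + 15 * (nbits N * t) + 2 * t by ring.
move: tN head tail quad nt; move: (2 ^ t) (i0 * X * t) (t * D) (nbits N * t) (t.+1 * t).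
lia.
Qed.

Theorem mainTheorem2 :
  exists c : nat, 0 < c /\
  forall (R : realFieldType) (N : nat) (a : nat -> R),
    2 <= N ->
    (forall i j, i < j < N -> (a i < a j)%R) ->
    (forall i j, i < N -> j < N -> (a i + 1 != a j)%R) ->
    exists (m : nat) (B : obdd (xyvar (nbits N)) m),
      [/\ is_pi_obdd (@interleaved_rank (nbits N)) B,
          represents B (@chiE R a N) &
          obdd_size B * trunc_log 2 N <= c * N].
Proof.
exists (13 * 1000); split => // R N a N2 a_incr _.
have n_gt0 : 0 < nbits N by rewrite /nbits up_log_gt0; apply/andP; split.
have [m [B [Bpi Brep Bm]]] := chiE_obdd a n_gt0.
exists m, B; split => //; apply: leq_trans (total_bound N2).
rewrite /obdd_size leq_mul2r leq_add2r; apply/orP; right.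
apply: leq_trans Bm _; rewrite leq_mul2l; apply/orP; right.
by apply: leq_sum => i _; apply: card_blocks_level => //; lia.
Qed.
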